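(* Let $a<b$ and let $f:[a,b]\to\mathbb{R}$ be continuous. For $a\le u<x\le b$ write $I_f(u,x)=\frac{1}{x-u}\int_u^x f(t)\,\mathrm{d}t$. If $$\bigl[f(a)-I_f(a,b)\bigr]\cdot\bigl[f(b)-I_f(a,b)\bigr]\geq 0,$$ then there exists $\eta\in(a,b]$ such that $f(\eta)=I_f(a,\eta)$.
   Context: $I_f(u,x)$ denotes the integral mean of $f$ over $[u,x]$. *)

From Stdlib Require Import Reals.
From Coquelicot Require Import Coquelicot.
Open Scope R_scope.

Definition continuous_on_Icc (f : R -> R) (a b : R) : Prop :=
  forall x, a <= x <= b ->
    filterlim f (within (fun y => a <= y <= b) (locally x)) (locally (f x)).

Definition I_mean (f : R -> R) (u x : R) : R := RInt f u x / (x - u).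

(* Extend f continuously to R by clamping its argument to [a,b] and consider
   the running mean M(x) = I_f(a,x), with M(a) = f(a). Since (x - a) M(x) is
   a primitive of f, M is continuous on [a,b] and M'(x) = (f(x) - M(x))/(x - a)
   for x > a, so the points sought are the critical points of M in (a,b].
   If f(b) = M(b) take eta = b; replacing f by -f, we may assume f(b) > M(b),
   hence f(a) >= M(b). Then M'(b) > 0 yields c < b with M(c) < M(b) <= M(a),
   so M attains its minimum on [a,b] inside (a,b), where M' vanishes. *)

From Stdlib Require Import Reals Lra.
From Coquelicot Require Import Coquelicot.
Open Scope R_scope.

Definition clamp (a b x : R) : R := Rmax a (Rmin b x).

Lemma clamp_in (a b x : R) : a <= b -> a <= clamp a b x <= b.
Proof. intros; unfold clamp, Rmax, Rmin; repeat destruct Rle_dec; lra. Qed.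

Lemma clamp_id (a b x : R) : a <= x <= b -> clamp a b x = x.
Proof. intros; unfold clamp, Rmax, Rmin; repeat destruct Rle_dec; lra. Qed.

Lemma clamp_1_lipschitz (a b x y : R) : a <= b ->
  Rabs (clamp a b y - clamp a b x) <= Rabs (y - x).
Proof.
  intros; unfold clamp, Rmax, Rmin; repeat destruct Rle_dec;
  unfold Rabs; repeat destruct Rcase_abs; lra.
Qed.

Lemma continuous_comp_clamp (f : R -> R) (a b x : R) : a <= b ->
  continuous_on_Icc f a b -> continuous (fun y => f (clamp a b y)) x.
Proof.
  intros hab hf.
  apply (filterlim_comp _ _ _ (clamp a b) f _
           (within (fun y => a <= y <= b) (locally (clamp a b x)))).
  - intros P [d Hd]; exists d; intros y Hy; apply Hd.
    + exact (Rle_lt_trans _ _ _ (clamp_1_lipschitz a b x y hab) Hy).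
    + exact (clamp_in a b y hab).
  - exact (hf _ (clamp_in a b x hab)).
Qed.

Lemma derivable_pt_lim_pos_left (h : R -> R) (c l d : R) :
  derivable_pt_lim h c l -> 0 < l -> 0 < d ->
  exists x, c - d < x < c /\ h x < h c.
Proof.
  intros hD hl hd; destruct (hD l hl) as [del Hdel].
  pose proof (cond_pos del) as hdel.
  set (s := Rmin (d / 2) (del / 2)).
  assert (hs : 0 < s) by (apply Rmin_pos; lra).
  assert (hsd : s <= d / 2) by apply Rmin_l.
  assert (hsdel : s <= del / 2) by apply Rmin_r.
  assert (hq : Rabs ((h (c + - s) - h c) / - s - l) < l).
  { apply Hdel; [lra|]. rewrite Rabs_Ropp, Rabs_pos_eq; lra. }
  exists (c + - s); split; [lra|].
  apply Rabs_def2 in hq; destruct hq as [_ hq].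
  assert (hpos : (h (c + - s) - h c) / - s > 0) by lra.
  apply Rdiv_pos_cases in hpos as [[_ hn] | [hp _]]; lra.
Qed.

Section RunningMean.
Variables (g : R -> R) (a : R).
Hypothesis hg : forall x, continuous g x.

Definition running_mean (x : R) : R :=
  if Rle_dec x a then g a else I_mean g a x.

Lemma ex_RInt_cont (u v : R) : ex_RInt g u v.
Proof. apply (ex_RInt_continuous (V := R_CompleteNormedModule)); auto. Qed.

Lemma derivable_pt_lim_RInt (x : R) :
  derivable_pt_lim (fun y => RInt g a y) x (g x).
Proof.
  apply is_derive_Reals, (is_derive_RInt _ _ a); [|apply hg].
  apply filter_forall; intros; apply (RInt_correct (V := R_CompleteNormedModule)), ex_RInt_cont.
Qed.

Lemma running_mean_gt (x : R) : a < x -> running_mean x = I_mean g a x.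
Proof. intros hx; unfold running_mean; destruct Rle_dec; [lra | reflexivity]. Qed.

Lemma running_mean_at : running_mean a = g a.
Proof. unfold running_mean; destruct Rle_dec; [reflexivity | lra]. Qed.

Lemma derivable_pt_lim_running_mean (x : R) : a < x ->
  derivable_pt_lim running_mean x ((g x - running_mean x) / (x - a)).
Proof.
  intros hx; apply is_derive_Reals.
  assert (hD : is_derive (fun t => RInt g a t / (t - a)) x
                 ((g x * (x - a) - RInt g a x * 1) / (x - a) ^ 2)).
  { apply (is_derive_div (fun t => RInt g a t) (fun t => t - a)).
    - apply is_derive_Reals, derivable_pt_lim_RInt.
    - auto_derive; auto; ring.
    - lra. }
  replace ((g x - running_mean x) / (x - a))
    with ((g x * (x - a) - RInt g a x * 1) / (x - a) ^ 2)
    by (rewrite running_mean_gt by lra; unfold I_mean; field; lra).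
  refine (is_derive_ext_loc _ _ _ _ _ hD).
  exists (mkposreal (x - a) ltac:(lra)); intros y hy.
  change (Rabs (y - x) < x - a) in hy; apply Rabs_def2 in hy.
  rewrite running_mean_gt by lra; reflexivity.
Qed.

(* The right limit of M at a is the derivative of the primitive at a. *)
Lemma continuity_pt_running_mean_left_end : continuity_pt running_mean a.
Proof.
  intros eps heps.
  destruct (derivable_pt_lim_RInt a eps heps) as [del Hdel].
  exists del; split; [apply cond_pos|].
  intros y [_ hy]; simpl in *; unfold R_dist in *.
  rewrite running_mean_at.
  unfold running_mean; destruct Rle_dec as [hya | hya].
  - rewrite Rminus_diag, Rabs_R0; lra.
  - assert (hq := Hdel (y - a) ltac:(lra) hy).
    replace (a + (y - a)) with y in hq by ring.
    rewrite RInt_point, Rminus_0_r in hq.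
    exact hq.
Qed.

Lemma continuity_pt_running_mean (x : R) : a <= x -> continuity_pt running_mean x.
Proof.
  intros [hx | <-]; [|exact continuity_pt_running_mean_left_end].
  exact (derivable_continuous_pt _ _ (exist _ _ (derivable_pt_lim_running_mean x hx))).
Qed.

Lemma running_mean_critical (x : R) (pr : derivable_pt running_mean x) :
  a < x -> derive_pt running_mean x pr = 0 -> g x = I_mean g a x.
Proof.
  intros hx h0.
  rewrite (derive_pt_eq_0 _ _ _ pr (derivable_pt_lim_running_mean x hx)) in h0.
  rewrite <- running_mean_gt by exact hx.
  apply Rminus_diag_uniq, (Rmult_eq_reg_r (/ (x - a))).
  - rewrite Rmult_0_l; exact h0.
  - apply Rinv_neq_0_compat; lra.
Qed.

Lemma I_mean_eq_exists_of_right_above (b : R) : a < b ->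
  g b > I_mean g a b -> g a >= I_mean g a b ->
  exists eta, a < eta < b /\ g eta = I_mean g a eta.
Proof.
  intros hab hgb hga.
  assert (hMb := running_mean_gt b hab).
  assert (hMa := running_mean_at).
  destruct (derivable_pt_lim_pos_left running_mean b _ (b - a)
              (derivable_pt_lim_running_mean b hab)) as [c [hc hMc]];
    [rewrite hMb; apply Rdiv_lt_0_compat; lra | lra |].
  destruct (continuity_ab_min running_mean a b ltac:(lra)) as [e [hmin he]].
  { intros; apply continuity_pt_running_mean; lra. }
  assert (hMe := hmin c ltac:(lra)).
  assert (hea : e <> a) by (intros ->; lra).
  assert (heb : e <> b) by (intros ->; lra).
  set (pr := exist _ _ (derivable_pt_lim_running_mean e ltac:(lra))
             : derivable_pt running_mean e).
  exists e; split; [lra|].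
  apply (running_mean_critical e pr); [lra|].
  apply (deriv_minimum _ a b); try lra.
  intros; apply hmin; lra.
Qed.

End RunningMean.

Lemma I_mean_opp (g : R -> R) (a x : R) : (forall y, continuous g y) ->
  I_mean (fun t => - g t) a x = - I_mean g a x.
Proof.
  intros hg; unfold I_mean.
  pose proof (RInt_opp (V := R_CompleteNormedModule) g a x (ex_RInt_cont g hg a x)) as E.
  change (RInt (fun t => - g t) a x = - RInt g a x) in E.
  rewrite E; unfold Rdiv; ring.
Qed.

Lemma I_mean_ext (f g : R -> R) (a x : R) : a <= x ->
  (forall y, a <= y <= x -> g y = f y) -> I_mean g a x = I_mean f a x.
Proof.
  intros hax hfg; unfold I_mean; f_equal; apply RInt_ext.
  rewrite Rmin_left, Rmax_right by exact hax.
  intros y hy; apply hfg; lra.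
Qed.

Lemma I_mean_eq_exists (g : R -> R) (a b : R) : a < b ->
  (forall y, continuous g y) ->
  (g a - I_mean g a b) * (g b - I_mean g a b) >= 0 ->
  exists eta, a < eta <= b /\ g eta = I_mean g a eta.
Proof.
  intros hab hg hs.
  destruct (Rtotal_order (g b) (I_mean g a b)) as [h | [h | h]].
  - assert (hg' : forall y, continuous (fun t => - g t) y)
      by (intros; apply (continuous_opp (V := R_NormedModule)); auto).
    destruct (I_mean_eq_exists_of_right_above (fun t => - g t) a hg' b hab)
      as [e [he He]]; rewrite !I_mean_opp in * by exact hg; [lra | nra |].
    exists e; split; lra.
  - exists b; split; [lra | exact h].
  - destruct (I_mean_eq_exists_of_right_above g a hg b hab h) as [e [he He]]; [nra|].
    exists e; split; [lra | exact He].
Qed.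

Theorem mainTheorem6 (f : R -> R) (a b : R) (hab : a < b)
  (hf : continuous_on_Icc f a b)
  (hsign : (f a - I_mean f a b) * (f b - I_mean f a b) >= 0) :
  exists eta, a < eta <= b /\ f eta = I_mean f a eta.
Proof.
  set (g := fun y => f (clamp a b y)).
  assert (hg : forall y, continuous g y)
    by (intros; apply continuous_comp_clamp; auto; lra).
  assert (Eg : forall x, a <= x <= b -> g x = f x)
    by (intros; unfold g; rewrite clamp_id; auto).
  assert (EI : forall x, a <= x <= b -> I_mean g a x = I_mean f a x)
    by (intros x hx; apply I_mean_ext; [lra | intros; apply Eg; lra]).
  destruct (I_mean_eq_exists g a b hab hg) as [e [he He]].
  - rewrite EI, !Eg by lra; exact hsign.
  - exists e; split; [exact he|].
    rewrite <- Eg, <- EI by lra; exact He.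
Qed.
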